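(* For any linear graph-based classifier $h$ and any $n$ users with features in $\mathbb{R}^\ell$ and nonnegative embedding weights, the myopic best-response dynamics described below converge (i.e., reach a round after which no user's features change), and they do so after at most $n$ rounds.
   Context: Embeddings: $\phi(x_i;x_{-i})=\widetilde{w}_{ii}x_i+\sum_{j\neq i}\widetilde{w}_{ji}x_j$ with $\widetilde{w}_{ji}\ge0$. Classifier: $h_{\theta,b}(x_i;x_{-i})=\mathrm{sign}(\theta^\top\phi(x_i;x_{-i})+b)\in\{\pm1\}$, $\mathrm{sign}(0)=+1$. Cost: $c(x,x')=\|x-x'\|_2$. Dynamics: $x_i^{(0)}=x_i$; at each round all users update concurrently by $x_i^{(t+1)}=\arg\max_{x'} h(x';x_{-i}^{(t)})-c(x_i^{(t)},x')-\kappa_i^{(t)}$ with accumulated costs $\kappa_i^{(t)}$; concretely, user $i$ changes her features in a round only if she is currently classified $-1$ and some $x'$ with $h(x';x^{(t)}_{-i})=+1$ has $c(x_i^{(t)},x')\le2$, in which case she moves to the minimum-cost such point (embedding exactly on the boundary $\theta^\top\phi+b=0$); otherwise she stays. *)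

From HB Require Import structures.
From mathcomp Require Import all_boot all_order all_algebra.
From mathcomp Require Import all_classical all_reals.
Set Implicit Arguments. Unset Strict Implicit. Unset Printing Implicit Defensive.
Import Order.TTheory GRing.Theory Num.Theory.
Local Open Scope ring_scope.

(* Users are indexed by 'I_n, features are row vectors 'rV[R]_l.
   W j i is the embedding weight \tilde w_{ji} (W i i = \tilde w_{ii}). *)

Definition dotv (R : realType) (l : nat) (u v : 'rV[R]_l) : R :=
  \sum_(k < l) u 0 k * v 0 k.

Definition eucl (R : realType) (l : nat) (v : 'rV[R]_l) : R :=
  Num.sqrt (\sum_(k < l) v 0 k ^+ 2).

Definition cost (R : realType) (l : nat) (x x' : 'rV[R]_l) : R := eucl (x - x').

Definition sgn (R : realType) (r : R) : int := if 0 <= r then 1%R else (-1)%R.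

Definition embed (R : realType) (n l : nat) (W : 'M[R]_n) (x : 'I_n -> 'rV[R]_l)
  (i : 'I_n) (x' : 'rV[R]_l) : 'rV[R]_l :=
  W i i *: x' + \sum_(j < n | j != i) W j i *: x j.

Definition hcls (R : realType) (n l : nat) (theta : 'rV[R]_l) (b : R) (W : 'M[R]_n)
  (x : 'I_n -> 'rV[R]_l) (i : 'I_n) (x' : 'rV[R]_l) : int :=
  sgn (dotv theta (embed W x i x') + b).

Definition moves (R : realType) (n l : nat) (theta : 'rV[R]_l) (b : R) (W : 'M[R]_n)
  (x : 'I_n -> 'rV[R]_l) (i : 'I_n) : Prop :=
  hcls theta b W x i (x i) = (-1)%R /\
  exists x', hcls theta b W x i x' = 1%R /\ cost (x i) x' <= 2.

(* One round of concurrent myopic best responses: x is the profile at round t,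
   y the profile at round t+1. A mover goes to a minimum-cost point among
   those classified +1 (given the others' current features). *)
Definition br_step (R : realType) (n l : nat) (theta : 'rV[R]_l) (b : R) (W : 'M[R]_n)
  (x y : 'I_n -> 'rV[R]_l) : Prop :=
  forall i : 'I_n,
    (moves theta b W x i /\
       hcls theta b W x i (y i) = 1%R /\
       (forall x', hcls theta b W x i x' = 1%R -> cost (x i) (y i) <= cost (x i) x'))
    \/ (~ moves theta b W x i /\ y i = x i).

(* With nonnegative weights a best response can only raise a user's projection
   [theta . x_i], so every user's margin [theta . phi + b] is nondecreasing
   along the dynamics.  A user moves only from a negative margin to a
   nonnegative one, so the set of users classified -1 shrinks strictly in every
   round in which someone moves, while a round in which nobody moves is a fixed
   point. *)
From HB Require Import structures.
From mathcomp Require Import all_boot all_order all_algebra.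
From mathcomp Require Import all_classical all_reals.
From mathcomp Require Import zify lra.
Set Implicit Arguments. Unset Strict Implicit. Unset Printing Implicit Defensive.
Import Order.TTheory GRing.Theory Num.Theory.

(* Stated before [ring_scope] is opened: there the [0] of [m 0] would be
   [GRing.zero], which [lia] does not recognise as the numeral. *)
Lemma stabilizes_by_descent (stable : pred nat) (m : nat -> nat) :
  (forall t, stable t -> stable t.+1) ->
  (forall t, ~~ stable t -> m t.+1 < m t) ->
  exists2 T, T <= m 0 & forall t, T <= t -> stable t.
Proof.
move=> stableS descent.
have stable_or_small t : stable t \/ m t + t <= m 0.
  elim: t => [|t [st | IH]]; first by right; rewrite addn0.
    by left; apply: stableS.
  case: (boolP (stable t)) => [/stableS st | /descent dec]; first by left.
  right; lia.
have stable_m0 : stable (m 0).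
  case: (stable_or_small (m 0)) => // small.
  apply/negPn/negP => /descent; lia.
exists (m 0) => // t /subnKC <-.
by elim: (t - m 0) => [|k IH]; rewrite ?addn0 ?addnS ?stableS.
Qed.

Local Open Scope ring_scope.

Lemma sgn_eq1 (R : realType) (r : R) : sgn r = 1 <-> 0 <= r.
Proof. by rewrite /sgn; case: ifP. Qed.

Lemma sgn_eqN1 (R : realType) (r : R) : sgn r = -1 <-> r < 0.
Proof. by rewrite /sgn ltNge; case: ifP. Qed.

Section BestResponseDynamics.

Variables (R : realType) (n l : nat) (W : 'M[R]_n) (theta : 'rV[R]_l) (b : R).

Implicit Types (x y : 'I_n -> 'rV[R]_l) (u v : 'rV[R]_l).

Lemma dotvD u v : dotv theta (u + v) = dotv theta u + dotv theta v.
Proof. by rewrite /dotv -big_split; apply: eq_bigr => k _; rewrite mxE mulrDr. Qed.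

Lemma dotv0 : dotv theta 0 = 0.
Proof. by rewrite /dotv big1 // => k _; rewrite mxE mulr0. Qed.

Lemma dotvZ a u : dotv theta (a *: u) = a * dotv theta u.
Proof. by rewrite /dotv mulr_sumr; apply: eq_bigr => k _; rewrite mxE mulrCA. Qed.

Definition margin x i u := dotv theta (embed W x i u) + b.

Lemma hclsE x i u : hcls theta b W x i u = sgn (margin x i u).
Proof. by []. Qed.

Lemma marginE x i u : margin x i u =
  W i i * dotv theta u + \sum_(j < n | j != i) W j i * dotv theta (x j) + b.
Proof.
rewrite /margin /embed dotvD dotvZ (big_morph _ dotvD dotv0).
by under eq_bigr do rewrite dotvZ.
Qed.

Definition rejected x := [set i | margin x i (x i) < 0].

Hypothesis W_ge0 : forall i j, 0 <= W i j.

Lemma margin_le x y i u v :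
  dotv theta u <= dotv theta v ->
  (forall j, dotv theta (x j) <= dotv theta (y j)) ->
  margin x i u <= margin y i v.
Proof.
move=> le_uv le_xy; rewrite !marginE lerD2r lerD ?ler_wpM2l //.
by apply: ler_sum => j _; apply: ler_wpM2l.
Qed.

Lemma br_step_dotv_le x y j :
  br_step theta b W x y -> dotv theta (x j) <= dotv theta (y j).
Proof.
case/(_ j) => [[[rej _] [acc _]] | [_ ->]] //.
rewrite hclsE sgn_eqN1 marginE in rej; rewrite hclsE sgn_eq1 marginE in acc.
rewrite leNgt; apply/negP => /ltW /(ler_wpM2l (W_ge0 j j)); lra.
Qed.

Lemma br_step_mover x y i : br_step theta b W x y -> y i <> x i ->
  margin x i (x i) < 0 <= margin y i (y i).
Proof.
move=> step; case: (step i) => [[[rej _] [acc _]] | [_ //]] _.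
rewrite hclsE sgn_eqN1 in rej; rewrite hclsE sgn_eq1 in acc.
rewrite rej (le_trans acc) // margin_le // => j.
exact: br_step_dotv_le.
Qed.

Lemma br_step_rejected_proper x y i : br_step theta b W x y -> y i <> x i ->
  rejected y \proper rejected x.
Proof.
move=> step moved; have /andP[rej acc] := br_step_mover step moved.
apply/properP; split; last by exists i; rewrite inE -?leNgt.
apply/fintype.subsetP => j; rewrite !inE; apply: le_lt_trans.
by apply: margin_le => [|k]; apply: br_step_dotv_le.
Qed.

End BestResponseDynamics.

Lemma br_step_fixpoint (R : realType) (n l : nat) (W : 'M[R]_n)
    (theta : 'rV[R]_l) (b : R) (x y : 'I_n -> 'rV[R]_l) :
  br_step theta b W x x -> br_step theta b W x y -> y = x.
Proof.
move=> still step; apply: funext => i.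
case: (step i) => [[mv _] | [_ //]].
case: (still i) => [[_ [acc _]] | [/(_ mv) //]].
by case: mv; rewrite acc.
Qed.

Theorem corollary1 (R : realType) (n l : nat) (W : 'M[R]_n) (theta : 'rV[R]_l)
  (b : R) (X : nat -> 'I_n -> 'rV[R]_l) :
  (forall i j : 'I_n, 0 <= W i j) ->
  (forall t : nat, br_step theta b W (X t) (X t.+1)) ->
  exists T : nat, (T <= n)%N /\
    forall t : nat, (T <= t)%N -> forall i : 'I_n, X t.+1 i = X t i.
Proof.
move=> W_ge0 step.
pose stable t := [forall i, X t.+1 i == X t i].
have stableS t : stable t -> stable t.+1.
  move=> /forallP still; have E : X t.+1 = X t by apply/funext => i; apply/eqP.
  have X_SS : X t.+2 = X t.+1.
    by move: (step t) (step t.+1); rewrite E => /br_step_fixpoint fixed /fixed.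
  by apply/forallP => i; rewrite X_SS.
have descent t : ~~ stable t ->
    (#|rejected W theta b (X t.+1)| < #|rejected W theta b (X t)|)%N.
  rewrite negb_forall => /existsP[i /eqP moved].
  exact/proper_card/(br_step_rejected_proper W_ge0 (step t) moved).
have [T le_T_m0 stable_from] := stabilizes_by_descent stableS descent.
exists T; split; first by rewrite (leq_trans le_T_m0) // -[leqRHS]card_ord max_card.
by move=> t /stable_from /forallP still i; apply/eqP.
Qed.
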